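(* Let $J$ be the ideal of a non-trivial, non-minimal tetrahedral curve $(a_1,\dots,a_6)$, and let $J=L\cdot I+(F)$ be the basic double link obtained by reducing $J$ at a facet of maximal weight (with $L$, $F$ and $I$ as prescribed by that reduction). Set $e=\deg F$. Then the mapping cone resolution of $J$ obtained from the exact sequence $$0\to R(-e-1)\to I(-1)\oplus R(-e)\to J\to 0$$ (first map $C\mapsto (FC,LC)$, second map $(A,B)\mapsto LA-FB$), using the minimal free resolution of $I$, is a minimal free resolution if and only if $J$ is not, up to a permutation of the variables, the ideal of a curve $(0,r,r,r,r,0)$.
   Context: Let $k$ be a field, $R=k[a,b,c,d]$. The tetrahedral curve $(a_1,\dots,a_6)$ has ideal $(a,b)^{a_1}\cap(a,c)^{a_2}\cap(a,d)^{a_3}\cap(b,c)^{a_4}\cap(b,d)^{a_5}\cap(c,d)^{a_6}$; permuting variables permutes entries. Facets $\{a_1,a_2,a_3\},\{a_1,a_4,a_5\},\{a_2,a_4,a_6\},\{a_3,a_5,a_6\}$ with weight the sum of entries. With $a_i'=\max\{0,a_i-1\}$, the reductions: (A) if $a_1+a_2\ge a_4$, $a_1+a_3\ge a_5$, $a_2+a_3\ge a_6$: $L=a$, $F=b^{a_1}c^{a_2}d^{a_3}$, $I$ the ideal of $(a_1',a_2',a_3',a_4,a_5,a_6)$; (B) if $a_1+a_4\ge a_2$, $a_1+a_5\ge a_3$, $a_4+a_5\ge a_6$: $L=b$, $F=a^{a_1}c^{a_4}d^{a_5}$, $I$ of $(a_1',a_2,a_3,a_4',a_5',a_6)$; (C)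 if $a_2+a_4\ge a_1$, $a_2+a_6\ge a_3$, $a_4+a_6\ge a_5$: $L=c$, $F=a^{a_2}b^{a_4}d^{a_6}$, $I$ of $(a_1,a_2',a_3,a_4',a_5,a_6')$; (D) if $a_3+a_5\ge a_1$, $a_3+a_6\ge a_2$, $a_5+a_6\ge a_4$: $L=d$, $F=a^{a_3}b^{a_5}c^{a_6}$, $I$ of $(a_1,a_2,a_3',a_4,a_5',a_6')$; in each case $J=L\cdot I+(F)$. These are reductions at the facets $\{a_1,a_2,a_3\},\{a_1,a_4,a_5\},\{a_2,a_4,a_6\},\{a_3,a_5,a_6\}$ respectively. A non-arithmetically Cohen–Macaulay curve is minimal if no reduction applies; if a non-trivial curve is not minimal, a reduction at a facet of maximal weight exists. *)

(* MathComp + multinomials (mpoly).  R = k[a,b,c,d] = {mpoly k[4]},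
   with a = 'X_0, b = 'X_1, c = 'X_2, d = 'X_3. *)
From HB Require Import structures.
From mathcomp Require Import all_boot all_order all_algebra all_fingroup.
From mathcomp Require Import mpoly.
Set Implicit Arguments. Unset Strict Implicit. Unset Printing Implicit Defensive.
Import GRing.Theory.
Local Open Scope ring_scope.

Section Tetra.
Variable k : fieldType.
Local Notation R := {mpoly k[4]}.

Definition ideal_gen (S : R -> Prop) : R -> Prop :=
  fun p => exists (n : nat) (g c : 'I_n -> R),
    (forall i, S (g i)) /\ p = \sum_(i < n) c i * g i.

Definition ideal_mul (I1 I2 : R -> Prop) : R -> Prop :=
  ideal_gen (fun p => exists x y, I1 x /\ I2 y /\ p = x * y).

Definition ideal_pow (I : R -> Prop) (n : nat) : R -> Prop :=
  iter n (ideal_mul I) (fun _ => True).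

Definition var_ideal (i j : 'I_4) : R -> Prop :=
  ideal_gen (fun p => p = 'X_i \/ p = 'X_j).

Record curve := Curve { a1 : nat; a2 : nat; a3 : nat; a4 : nat; a5 : nat; a6 : nat }.

Definition va : 'I_4 := inord 0.
Definition vb : 'I_4 := inord 1.
Definition vc : 'I_4 := inord 2.
Definition vd : 'I_4 := inord 3.

Definition tet_ideal (C : curve) : R -> Prop := fun p =>
  ideal_pow (var_ideal va vb) (a1 C) p /\
  ideal_pow (var_ideal va vc) (a2 C) p /\
  ideal_pow (var_ideal va vd) (a3 C) p /\
  ideal_pow (var_ideal vb vc) (a4 C) p /\
  ideal_pow (var_ideal vb vd) (a5 C) p /\
  ideal_pow (var_ideal vc vd) (a6 C) p.

Definition nontrivial (C : curve) : Prop :=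
  ~ (a1 C = 0%N /\ a2 C = 0%N /\ a3 C = 0%N /\ a4 C = 0%N /\ a5 C = 0%N /\ a6 C = 0%N).

(* facets {a1,a2,a3}, {a1,a4,a5}, {a2,a4,a6}, {a3,a5,a6} *)
Inductive facet := FA | FB | FC | FD.

Definition weight (C : curve) (f : facet) : nat :=
  match f with
  | FA => a1 C + a2 C + a3 C
  | FB => a1 C + a4 C + a5 C
  | FC => a2 C + a4 C + a6 C
  | FD => a3 C + a5 C + a6 C
  end.

Definition red_cond (C : curve) (f : facet) : Prop :=
  match f with
  | FA => [/\ a4 C <= a1 C + a2 C, a5 C <= a1 C + a3 C & a6 C <= a2 C + a3 C]%N
  | FB => [/\ a2 C <= a1 C + a4 C, a3 C <= a1 C + a5 C & a6 C <= a4 C + a5 C]%N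
  | FC => [/\ a1 C <= a2 C + a4 C, a3 C <= a2 C + a6 C & a5 C <= a4 C + a6 C]%N
  | FD => [/\ a1 C <= a3 C + a5 C, a2 C <= a3 C + a6 C & a4 C <= a5 C + a6 C]%N
  end.

Definition red_L (f : facet) : R :=
  match f with FA => 'X_va | FB => 'X_vb | FC => 'X_vc | FD => 'X_vd end.

Definition red_F (C : curve) (f : facet) : R :=
  match f with
  | FA => 'X_vb ^+ a1 C * 'X_vc ^+ a2 C * 'X_vd ^+ a3 C
  | FB => 'X_va ^+ a1 C * 'X_vc ^+ a4 C * 'X_vd ^+ a5 C
  | FC => 'X_va ^+ a2 C * 'X_vb ^+ a4 C * 'X_vd ^+ a6 C
  | FD => 'X_va ^+ a3 C * 'X_vb ^+ a5 C * 'X_vc ^+ a6 C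
  end.

(* the curve whose ideal is I;  a_i' = max{0, a_i - 1} = a_i.-1 *)
Definition red_I (C : curve) (f : facet) : curve :=
  match f with
  | FA => Curve (a1 C).-1 (a2 C).-1 (a3 C).-1 (a4 C) (a5 C) (a6 C)
  | FB => Curve (a1 C).-1 (a2 C) (a3 C) (a4 C).-1 (a5 C).-1 (a6 C)
  | FC => Curve (a1 C) (a2 C).-1 (a3 C) (a4 C).-1 (a5 C) (a6 C).-1
  | FD => Curve (a1 C) (a2 C) (a3 C).-1 (a4 C) (a5 C).-1 (a6 C).-1
  end.

Definition special (C : curve) : Prop :=
  exists (s : 'S_4) (r : nat),
    forall p : R, tet_ideal C p <-> tet_ideal (Curve 0 r r r r 0) (msym s p).

(* A graded free module F_i = (+)_{j < rk i} R(-sh i j); elements are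
   column vectors.  aug : F_0 -> R is the row of generators, and
   dif i : F_(i+1) -> F_i is a matrix acting on column vectors.        *)

Record gres := GRes {
  rk  : nat -> nat;
  sh  : forall i, 'I_(rk i) -> nat;
  aug : 'rV[R]_(rk 0);
  dif : forall i, 'M[R]_(rk i, rk i.+1) }.
Arguments rk g i : clear implicits.
Arguments sh g i j : clear implicits.
Arguments aug g : clear implicits.
Arguments dif g i : clear implicits.

(* p is a degree-preserving entry from R(-t) to R(-s) *)
Definition gr_entry (p : R) (s t : nat) : Prop :=
  if (s <= t)%N then p \is (t - s)%N.-homog else p == 0.

Definition is_graded (G : gres) : Prop :=
  (forall j, gr_entry (aug G 0 j) 0 (sh G 0 j)) /\
  (forall i a b, gr_entry (dif G i a b) (sh G i a) (sh G i.+1 b)).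

Definition is_resolution (I : R -> Prop) (G : gres) : Prop :=
  [/\ (forall p, I p <-> exists v : 'cV[R]_(rk G 0), p = (aug G *m v) 0 0),
      (forall v : 'cV[R]_(rk G 0), aug G *m v = 0 <-> exists w, v = dif G 0 *m w) &
      (forall i (v : 'cV[R]_(rk G i.+1)),
          dif G i *m v = 0 <-> exists w, v = dif G i.+1 *m w)].

(* minimality: all differentials have entries in the maximal ideal
   (a,b,c,d), i.e. with zero constant term *)
Definition is_minimal (G : gres) : Prop :=
  forall i a b, (dif G i a b)@_0%MM = 0.

Definition is_min_free_res (I : R -> Prop) (G : gres) : Prop :=
  [/\ is_graded G, is_resolution I G & is_minimal G].

(* The mapping cone resolution of J = L*I + (F) from
     0 -> R(-e-1) -> I(-1) (+) R(-e) -> J -> 0,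
   C |-> (F C, L C),  (A,B) |-> L A - F B,
   given a graded free resolution G of I and a lift c : R(-e-1) -> F_0(-1)
   of C |-> F C (i.e. aug G *m c = F).                                   *)

Section Cone.
Variables (G : gres) (L F : R) (e : nat) (c : 'cV[R]_(rk G 0)).

Definition cone_rk (i : nat) : nat :=
  match i with
  | 0 => (rk G 0 + 1)%N
  | 1 => (rk G 1 + 1)%N
  | n => rk G n
  end.

Definition cone_sh (i : nat) : 'I_(cone_rk i) -> nat :=
  match i return 'I_(cone_rk i) -> nat with
  | 0 => fun j => match split j with inl j' => (sh G 0 j').+1 | inr _ => e end
  | 1 => fun j => match split j with inl j' => (sh G 1 j').+1 | inr _ => e.+1 end
  | n.+2 => fun j => (sh G n.+2 j).+1
  end.

Definition cone_aug : 'rV[R]_(cone_rk 0) :=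
  row_mx (L *: aug G) (- (F%:M : 'M[R]_1)).

Definition cone_dif (i : nat) : 'M[R]_(cone_rk i, cone_rk i.+1) :=
  match i return 'M[R]_(cone_rk i, cone_rk i.+1) with
  | 0 => block_mx (dif G 0) c 0 (L%:M : 'M[R]_1)
  | 1 => col_mx (dif G 1) 0
  | n.+2 => dif G n.+2
  end.

Definition cone : gres := GRes cone_sh cone_aug cone_dif.
End Cone.

End Tetra.
Arguments rk {k} g i.
Arguments sh {k} g i j.
Arguments aug {k} g.
Arguments dif {k} g i.
Arguments tet_ideal : clear implicits.
Arguments red_F k C f.
Arguments red_L k f.
Arguments special k C.
Arguments cone {k} G L F e c.
Arguments is_min_free_res {k} I G.
Arguments gr_entry {k} p s t.

(* The reduction J = L I + (F) is a basic double link: L = x_v is a variable and F a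
   monomial not involving x_v, so L * A = F * s forces x_v | s, and the mapping cone of
   0 -> R(-e-1) -> I(-1) (+) R(-e) -> J -> 0 over a minimal resolution of I is a graded
   free resolution of J.  Its only entries that may be units are those of the lift c of
   F to the generators of I, so it is minimal iff c has no constant term.  As I is a
   monomial ideal containing F, this happens iff F is not a minimal generator of I,
   i.e. iff F / x lies in I for some variable x.  At a facet of maximal weight, the
   reduction inequalities and the weight inequalities leave exactly one way for all
   three candidates F / x to fail: one pair of opposite edges carries 0 and the other
   four edges carry a common value r, which is (0,r,r,r,r,0) up to relabelling. *)

From HB Require Import structures.
From mathcomp Require Import all_boot all_order all_algebra all_fingroup.
From mathcomp Require Import mpoly.
From mathcomp Require Import zify.
Set Implicit Arguments.
Unset Strict Implicit.
Unset Printing Implicit Defensive.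
Import GRing.Theory.
Local Open Scope ring_scope.

Section MonomialSupport.
Variables (n : nat) (R : nzRingType).
Implicit Types (p q : {mpoly R[n]}) (m : 'X_{1..n}) (P Q : 'X_{1..n} -> Prop).

Definition supp_in P p := forall m, p@_m != 0 -> P m.

Lemma supp_in0 P : supp_in P 0.
Proof. by move=> m; rewrite mcoeff0 eqxx. Qed.

Lemma supp_inD P p q : supp_in P p -> supp_in P q -> supp_in P (p + q).
Proof.
move=> Pp Pq m; rewrite mcoeffD.
by have [->|/Pp//] := eqVneq p@_m 0; rewrite add0r => /Pq.
Qed.

Lemma supp_inN P p : supp_in P p -> supp_in P (- p).
Proof. by move=> Pp m; rewrite mcoeffN oppr_eq0 => /Pp. Qed.

Lemma supp_inZ P c p : supp_in P p -> supp_in P (c *: p).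
Proof.
by move=> Pp m; rewrite mcoeffZ => nz; apply: Pp; apply: contraNneq nz => ->; rewrite mulr0.
Qed.

Lemma supp_in_sum P (I : Type) (r : seq I) (S : pred I) (F : I -> {mpoly R[n]}) :
  (forall i, S i -> supp_in P (F i)) -> supp_in P (\sum_(i <- r | S i) F i).
Proof. by move=> PF; apply: big_ind => //; [apply: supp_in0 | apply: supp_inD]. Qed.

Lemma supp_inM P Q (S : 'X_{1..n} -> Prop) p q :
  (forall m1 m2, P m1 -> Q m2 -> S (m1 + m2)%MM) ->
  supp_in P p -> supp_in Q q -> supp_in S (p * q).
Proof.
move=> PQS Pp Qq m; rewrite -mcoeff_msupp => /msuppM_le /allpairsP [[m1 m2] /= []].
by rewrite !mcoeff_msupp => /Pp ? /Qq ? ->; apply: PQS.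
Qed.

Lemma supp_inW P Q p : (forall m, P m -> Q m) -> supp_in P p -> supp_in Q p.
Proof. by move=> PQ Pp m /Pp /PQ. Qed.

Lemma supp_in_X P m : supp_in P ('X_[m] : {mpoly R[n]}) <-> P m.
Proof.
split; first by apply; rewrite mcoeffX eqxx oner_neq0.
by move=> Pm m'; rewrite mcoeffX; case: (eqVneq m m') => [<- //|_]; rewrite eqxx.
Qed.

Lemma supp_in_iff P Q :
  (forall p, supp_in P p <-> supp_in Q p) -> forall m, P m <-> Q m.
Proof. by move=> PQ m; rewrite -(supp_in_X P) -(supp_in_X Q). Qed.

Lemma mpolyX_neq0 m : ('X_[m] : {mpoly R[n]}) != 0.
Proof. by rewrite -msupp_eq0 msuppX. Qed.

Lemma mcoeff0M p q : (p * q)@_0 = p@_0 * q@_0.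
Proof. exact: rmorphM. Qed.

End MonomialSupport.

Section MonomialIdeals.
Variables (n : nat) (R : comNzRingType).
Implicit Types (p q s : {mpoly R[n]}) (m : 'X_{1..n}) (P : 'X_{1..n} -> Prop).

Definition upclosed P := forall m m', P m -> (m <= m')%MM -> P m'.

Definition ideal_closed (I : {mpoly R[n]} -> Prop) :=
  [/\ I 0, forall p q, I p -> I q -> I (p + q) & forall r p, I p -> I (r * p)].

Lemma supp_in_ideal (I : {mpoly R[n]} -> Prop) P p :
  ideal_closed I -> (forall m, P m -> I 'X_[m]) -> supp_in P p -> I p.
Proof.
move=> [I0 ID IM] IX Pp; rewrite (mpolyE p) big_seq.
apply: big_ind => // m; rewrite mcoeff_msupp => /Pp /IX.
by rewrite -mul_mpolyC; apply: IM.
Qed.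

Lemma supp_in_ideal_closed P : upclosed P -> ideal_closed (@supp_in n R P).
Proof.
move=> Pup; split; [exact: supp_in0 | exact: supp_inD | move=> r p].
by apply: (@supp_inM _ _ (fun _ => True)) => // m1 m2 _ /Pup; apply; apply: lem_addl.
Qed.

Lemma upclosed_subU P m1 m :
  upclosed P -> P m1 -> (m1 <= m)%MM -> m1 != m ->
  exists v, (U_(v) <= m)%MM /\ P (m - U_(v))%MM.
Proof.
move=> Pup Pm1 /mnm_lepP le neq.
have [v lt | eq] := pickP (fun i => m1 i < m i)%N; last first.
  by case/eqP: neq; apply/mnmP => i; apply/eqP; rewrite eqn_leq le leqNgt eq.
exists v; split; first by rewrite lep1mP -lt0n (leq_ltn_trans _ lt).
apply: Pup Pm1 _; apply/mnm_lepP => i; rewrite mnmBE mnm1E.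
by case: eqP => [<-|_]; rewrite ?subn0 ?le //= leq_subRL ?addn1 // (leq_ltn_trans _ lt).
Qed.

Lemma supp_in_dvdX m0 s :
  supp_in (fun m => m0 <= m)%MM s -> exists t, s = 'X_[m0] * t.
Proof.
move=> s_m0; exists (\sum_(m <- msupp s) s@_m *: 'X_[m - m0]).
rewrite {1}(mpolyE s) mulr_sumr big_seq [RHS]big_seq; apply: eq_bigr => m.
by rewrite mcoeff_msupp => /s_m0 le; rewrite -scalerAr -mpolyXD addmC submK.
Qed.

Lemma dvdX_mulX (v : 'I_n) (mF : 'X_{1..n}) A s :
  mF v = 0%N -> 'X_v * A = 'X_[mF] * s -> exists t, s = 'X_v * t.
Proof.
move=> mFv E; apply: supp_in_dvdX => m nz /=.
have XvA : supp_in (fun m => U_(v) <= m)%MM ('X_v * A).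
  apply: (@supp_inM _ _ (eq U_(v)%MM) (fun _ => True)); last by [].
  - by move=> _ m2 <- _; apply: lem_addr.
  - exact/supp_in_X.
have /XvA : ('X_v * A)@_(mF + m) != 0 by rewrite E mulrC mcoeffMX.
by rewrite !lep1mP mnmDE mFv add0n.
Qed.

Lemma supp_in_link (PJ PI : 'X_{1..n} -> Prop) (v : 'I_n) (mF : 'X_{1..n}) :
  (forall m, PJ m <-> (mF <= m)%MM \/ (U_(v) <= m)%MM /\ PI (m - U_(v))%MM) ->
  forall p, supp_in PJ p <-> exists q s, supp_in PI q /\ p = 'X_v * q - 'X_[mF] * s.
Proof.
move=> PJE p; split; last first.
  move=> [q [s [PIq ->]]]; apply: supp_inD; last apply: supp_inN.
  - apply: (@supp_inM _ _ (eq U_(v)%MM) PI) => //; last exact/supp_in_X.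
    by move=> _ m2 <- PIm2; apply/PJE; right; rewrite addmC addmK lem_addl.
  - apply: (@supp_inM _ _ (eq mF) (fun _ => True)) => //; last exact/supp_in_X.
    by move=> _ m2 <- _; apply/PJE; left; apply: lem_addr.
move=> PJp; rewrite (mpolyE p) big_seq.
apply: (big_ind (fun x => exists q s, supp_in PI q /\ x = 'X_v * q - 'X_[mF] * s)).
- by exists 0, 0; rewrite !mulr0 subr0; split => //; apply: supp_in0.
- move=> _ _ [q1 [s1 [PI1 ->]]] [q2 [s2 [PI2 ->]]].
  exists (q1 + q2), (s1 + s2); split; first exact: supp_inD.
  by rewrite !mulrDr opprD addrACA.
move=> m; rewrite mcoeff_msupp => /PJp /PJE [le | [le PIm]].
- exists 0, (- (p@_m *: 'X_[m - mF])); split; first exact: supp_in0.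
  by rewrite mulr0 sub0r mulrN opprK -scalerAr -mpolyXD addmC submK.
- exists (p@_m *: 'X_[m - U_(v)]), 0; split; first by apply: supp_inZ; apply/supp_in_X.
  by rewrite mulr0 subr0 -scalerAr -mpolyXD addmC submK.
Qed.

End MonomialIdeals.

Section PowersOfVariableIdeals.
Variable k : fieldType.
Local Notation R := {mpoly k[4]}.
Implicit Types (p q : R) (S I : R -> Prop).

Lemma ideal_gen_closed S : ideal_closed (ideal_gen S).
Proof.
split.
- by exists 0%N, (fun _ => 0), (fun _ => 0); split => [[]|]; rewrite // big_ord0.
- move=> _ _ [n1 [g1 [c1 [S1 ->]]]] [n2 [g2 [c2 [S2 ->]]]].
  pose glue T (f1 : 'I_n1 -> T) (f2 : 'I_n2 -> T) i :=
    match split i with inl a => f1 a | inr b => f2 b end.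
  exists (n1 + n2)%N, (glue _ g1 g2), (glue _ c1 c2); split.
    by move=> i; rewrite /glue; case: split.
  rewrite big_split_ord /glue; congr (_ + _); apply: eq_bigr => i _.
    by rewrite (unsplitK (inl _ i)).
  by rewrite (unsplitK (inr _ i)).
- move=> r _ [n [g [c [Sg ->]]]]; exists n, g, (fun i => r * c i); split => //.
  by rewrite mulr_sumr; apply: eq_bigr => i _; rewrite mulrA.
Qed.

Lemma ideal_gen_sub S p : S p -> ideal_gen S p.
Proof.
move=> Sp; exists 1%N, (fun _ => p), (fun _ => 1); split => //.
by rewrite big_ord1 mul1r.
Qed.

Lemma ideal_gen_min S I p :
  ideal_closed I -> (forall x, S x -> I x) -> ideal_gen S p -> I p.
Proof. by move=> [I0 ID IM] SI [n [g [c [Sg ->]]]]; apply: big_ind => // i _; apply/IM/SI. Qed.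

Lemma ideal_pow_closed I e : ideal_closed (ideal_pow I e).
Proof. by case: e => [|e]; [split | apply: ideal_gen_closed]. Qed.

Lemma ideal_powS I e p q : I p -> ideal_pow I e q -> ideal_pow I e.+1 (p * q).
Proof. by move=> Ip Iq; apply: ideal_gen_sub; exists p, q. Qed.

Lemma upclosed_edge (i j : 'I_4) e : upclosed (fun m : 'X_{1..4} => e <= m i + m j)%N.
Proof. by move=> m m' le /mnm_lepP lem; apply: (leq_trans le); apply: leq_add. Qed.

Lemma ideal_pow_var_idealE (i j : 'I_4) e p : i != j ->
  ideal_pow (var_ideal i j) e p <-> supp_in (fun m => e <= m i + m j)%N p.
Proof.
move=> neq_ij; split.
  elim: e p => [|e IH] p /=; first by move=> _ m.
  apply: ideal_gen_min; first exact/supp_in_ideal_closed/upclosed_edge.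
  move=> _ [x [y [Vx [Py ->]]]].
  apply: (@supp_inM _ _ (fun m => 1 <= m i + m j)%N) (IH _ Py).
    by move=> m1 m2 /=; rewrite !mnmDE; lia.
  apply: ideal_gen_min Vx; first exact/supp_in_ideal_closed/upclosed_edge.
  by move=> _ [->|->]; apply/supp_in_X; rewrite !mnm1E eqxx ?addn1.
apply: supp_in_ideal; first exact: ideal_pow_closed.
elim: e => [|e IH] m le //.
have [w [w_ij w_pos]] : exists w, (w = i \/ w = j) /\ (0 < m w)%N.
  by case: (posnP (m i)) => [mi0|]; [exists j; split; [right | lia] | exists i; split; [left|]].
rewrite -(submK (_ : U_(w) <= m)%MM) ?lep1mP -?lt0n // mpolyXD mulrC.
apply: ideal_powS; first by apply: ideal_gen_sub; case: w_ij => ->; [left | right].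
have [ij ji] : (i == j) = false /\ (j == i) = false.
  by rewrite (negbTE neq_ij) eq_sym (negbTE neq_ij).
by apply: IH; rewrite !mnmBE !mnm1E; case: w_ij => ->; rewrite eqxx ?ij ?ji /=; lia.
Qed.

End PowersOfVariableIdeals.

Section TetrahedralMonomials.

Lemma val_va : val va = 0%N. Proof. exact: inordK. Qed.
Lemma val_vb : val vb = 1%N. Proof. exact: inordK. Qed.
Lemma val_vc : val vc = 2%N. Proof. exact: inordK. Qed.
Lemma val_vd : val vd = 3%N. Proof. exact: inordK. Qed.
Definition val_vertex := (val_va, val_vb, val_vc, val_vd).

Lemma vertexP (i : 'I_4) : [\/ i = va, i = vb, i = vc | i = vd].
Proof.
case: i => [[|[|[|[|//]]]] lti]; [constructor 1|constructor 2|constructor 3|constructor 4];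
  by apply: val_inj; rewrite /= val_vertex.
Qed.

Lemma exists_vertex (P : 'I_4 -> Prop) :
  (exists v, P v) <-> P va \/ P vb \/ P vc \/ P vd.
Proof.
split=> [[v]|]; last by case=> [|[|[|]]] Pv; eexists; exact: Pv.
by case: (vertexP v) => ->; tauto.
Qed.

Lemma lepm_vertex (m1 m2 : 'X_{1..4}) : (m1 <= m2)%MM <->
  (m1 va <= m2 va /\ m1 vb <= m2 vb /\ m1 vc <= m2 vc /\ m1 vd <= m2 vd)%N.
Proof.
split => [/mnm_lepP le | le]; first by rewrite !le.
by apply/mnm_lepP => i; case: (vertexP i) => ->; lia.
Qed.

Definition mk4 (x y z w : nat) : 'X_{1..4} :=
  [multinom nth 0%N [:: x; y; z; w] i | i < 4].

Lemma mk4_va x y z w : mk4 x y z w va = x. Proof. by rewrite mnmE val_va. Qed.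
Lemma mk4_vb x y z w : mk4 x y z w vb = y. Proof. by rewrite mnmE val_vb. Qed.
Lemma mk4_vc x y z w : mk4 x y z w vc = z. Proof. by rewrite mnmE val_vc. Qed.
Lemma mk4_vd x y z w : mk4 x y z w vd = w. Proof. by rewrite mnmE val_vd. Qed.
Definition mk4E := (mk4_va, mk4_vb, mk4_vc, mk4_vd).

Lemma mk4_eta (m : 'X_{1..4}) : m = mk4 (m va) (m vb) (m vc) (m vd).
Proof. by apply/mnmP => i; case: (vertexP i) => ->; rewrite mk4E. Qed.

Lemma mk4_subU x y z w :
  ((mk4 x y z w - U_(va) = mk4 x.-1 y z w)%MM * (mk4 x y z w - U_(vb) = mk4 x y.-1 z w)%MM *
   (mk4 x y z w - U_(vc) = mk4 x y z.-1 w)%MM * (mk4 x y z w - U_(vd) = mk4 x y z w.-1)%MM)%type.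
Proof.
by do !split; apply/mnmP => i; rewrite mnmBE mnm1E; case: (vertexP i) => ->;
  rewrite !mk4E -?val_eqE ?val_vertex ?subn1 ?subn0.
Qed.

Lemma lep1m_mk4 x y z w :
  (((U_(va) <= mk4 x y z w)%MM = (x != 0%N)) * ((U_(vb) <= mk4 x y z w)%MM = (y != 0%N)) *
   ((U_(vc) <= mk4 x y z w)%MM = (z != 0%N)) * ((U_(vd) <= mk4 x y z w)%MM = (w != 0%N)))%type.
Proof. by rewrite !lep1mP !mk4E. Qed.

Lemma mk4_sum x y z w :
  mk4 x y z w = (U_(va) *+ x + U_(vb) *+ y + U_(vc) *+ z + U_(vd) *+ w)%MM.
Proof.
apply/mnmP => i; rewrite !mnmDE !mulmnE !mnm1E.
by case: (vertexP i) => ->; rewrite mk4E -!val_eqE !val_vertex /=; lia.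
Qed.

Lemma mdeg_mk4 x y z w : mdeg (mk4 x y z w) = (x + y + z + w)%N.
Proof. by rewrite mk4_sum !mdegD !mdegMn !mdeg1 !mul1n. Qed.

Definition tet_mono (C : curve) (m : 'X_{1..4}) : Prop :=
  (a1 C <= m va + m vb /\ a2 C <= m va + m vc /\ a3 C <= m va + m vd /\
   a4 C <= m vb + m vc /\ a5 C <= m vb + m vd /\ a6 C <= m vc + m vd)%N.

Lemma upclosed_tet_mono C : upclosed (tet_mono C).
Proof. by move=> m m' + /lepm_vertex; rewrite /tet_mono; lia. Qed.

Lemma tet_idealE (k : fieldType) C (p : {mpoly k[4]}) :
  tet_ideal k C p <-> supp_in (tet_mono C) p.
Proof.
rewrite /tet_ideal !ideal_pow_var_idealE; try by rewrite -val_eqE !val_vertex.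
split=> [[C1 [C2 [C3 [C4 [C5 C6]]]]] m nz | Cp].
  by do !split; [exact: C1 | exact: C2 | exact: C3 | exact: C4 | exact: C5 | exact: C6].
by (do !split) => m /Cp; rewrite /tet_mono; tauto.
Qed.

Definition facet_var (f : facet) : 'I_4 :=
  match f with FA => va | FB => vb | FC => vc | FD => vd end.

Definition facet_mono (C : curve) (f : facet) : 'X_{1..4} :=
  match f with
  | FA => mk4 0 (a1 C) (a2 C) (a3 C)
  | FB => mk4 (a1 C) 0 (a4 C) (a5 C)
  | FC => mk4 (a2 C) (a4 C) 0 (a6 C)
  | FD => mk4 (a3 C) (a5 C) (a6 C) 0
  end.

Lemma red_LE (k : fieldType) f : red_L k f = 'X_(facet_var f).
Proof. by case: f. Qed.

Lemma red_FE (k : fieldType) C f : red_F k C f = 'X_[facet_mono C f].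
Proof. by case: f; rewrite /= mk4_sum mulm0n ?add0m ?addm0 !mpolyXD !mpolyXn. Qed.

Lemma facet_mono_var C f : facet_mono C f (facet_var f) = 0%N.
Proof. by case: f; rewrite /= mk4E. Qed.

Lemma mdeg_facet_mono C f : mdeg (facet_mono C f) = weight C f.
Proof. by case: f; rewrite /= mdeg_mk4 /=; lia. Qed.

Lemma tet_mono_link C f : red_cond C f -> forall m,
  tet_mono C m <-> (facet_mono C f <= m)%MM \/
    (U_(facet_var f) <= m)%MM /\ tet_mono (red_I C f) (m - U_(facet_var f))%MM.
Proof.
move=> + m; rewrite [m]mk4_eta lepm_vertex /tet_mono.
by case: f => /= -[]; rewrite !mk4_subU !lep1m_mk4 !mk4E; lia.
Qed.

Lemma tet_ideal_link (k : fieldType) C f (p : {mpoly k[4]}) : red_cond C f ->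
  tet_ideal k C p <-> exists q s, tet_ideal k (red_I C f) q /\
    p = 'X_(facet_var f) * q - 'X_[facet_mono C f] * s.
Proof.
move=> rc; rewrite tet_idealE (supp_in_link (tet_mono_link rc)).
by split=> -[q [s [/tet_idealE Iq ->]]]; exists q, s.
Qed.

End TetrahedralMonomials.

Section FacetArithmetic.
Local Close Scope ring_scope.

Definition special_form (C : curve) : Prop :=
  (a1 C = 0 /\ a6 C = 0 /\ a2 C = a5 C /\ a5 C = a3 C /\ a3 C = a4 C) \/
  (a2 C = 0 /\ a5 C = 0 /\ a1 C = a6 C /\ a6 C = a3 C /\ a3 C = a4 C) \/
  (a3 C = 0 /\ a4 C = 0 /\ a1 C = a6 C /\ a6 C = a2 C /\ a2 C = a5 C).

(* F / x lies in I for x = b, c or d, at the facet {a1, a2, a3}. *)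
Definition facetA_drop (D : curve) : Prop :=
  (0 < a1 D /\ a5 D < a1 D + a3 D /\ a4 D < a1 D + a2 D) \/
  (0 < a2 D /\ a6 D < a2 D + a3 D /\ a4 D < a1 D + a2 D) \/
  (0 < a3 D /\ a6 D < a2 D + a3 D /\ a5 D < a1 D + a3 D).

Local Ltac disj_lia :=
  match goal with |- _ \/ _ => first [left; disj_lia | right; disj_lia] | _ => lia end.

Lemma facetA_drop_not_special D : facetA_drop D -> ~ special_form D.
Proof.
rewrite /facetA_drop /special_form.
by case=> [[? [? ?]] | [[? [? ?]] | [? [? ?]]]]
  [[? [? [? [? ?]]]] | [[? [? [? [? ?]]]] | [? [? [? [? ?]]]]]]; lia.
Qed.

(* If no F / x lies in I, two of d4 <= d1 + d2, d5 <= d1 + d3, d6 <= d2 + d3 are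
   equalities (else d1 = d2 = d3 = 0 and the curve is trivial), and the weight
   inequalities turn any two of them into one of the special shapes. *)
Lemma facetA_drop_or_special D : nontrivial D -> red_cond D FA ->
  (forall g, weight D g <= weight D FA) -> facetA_drop D \/ special_form D.
Proof.
case: D => d1 d2 d3 d4 d5 d6 nt [] /= r1 r2 r3 wmax.
move: (wmax FB) (wmax FC) (wmax FD) => /= w2 w3 w4 {wmax}.
have {}nt : 0 < d1 + d2 + d3 + d4 + d5 + d6 by move: nt; rewrite /nontrivial /=; lia.
rewrite /facetA_drop /special_form /=.
case: (posnP d1) => z1; case: (posnP d2) => z2; case: (posnP d3) => z3;
case: (ltnP d4 (d1 + d2)) => t4; case: (ltnP d5 (d1 + d3)) => t5;
case: (ltnP d6 (d2 + d3)) => t6; disj_lia.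
Qed.

Lemma facetA_drop_special D : nontrivial D -> red_cond D FA ->
  (forall g, weight D g <= weight D FA) -> facetA_drop D <-> ~ special_form D.
Proof.
move=> nt rc wmax; split; first exact: facetA_drop_not_special.
by case: (facetA_drop_or_special nt rc wmax).
Qed.

(* Relabels the vertices so that facet_var f becomes a, hence f becomes {a1, a2, a3}. *)
Definition reorient (C : curve) (f : facet) : curve :=
  match f with
  | FA => C
  | FB => Curve (a1 C) (a4 C) (a5 C) (a2 C) (a3 C) (a6 C)
  | FC => Curve (a2 C) (a4 C) (a6 C) (a1 C) (a3 C) (a5 C)
  | FD => Curve (a3 C) (a5 C) (a6 C) (a1 C) (a2 C) (a4 C)
  end.

Lemma special_form_reorient C f : special_form (reorient C f) <-> special_form C.
Proof.
rewrite /special_form; case: f => //=.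
all: by split; case=> [H|[H|H]]; disj_lia.
Qed.

Lemma red_cond_reorient C f : red_cond (reorient C f) FA = red_cond C f.
Proof. by case: f. Qed.

Lemma nontrivial_reorient C f : nontrivial (reorient C f) <-> nontrivial C.
Proof. by rewrite /nontrivial; case: f => /=; tauto. Qed.

Lemma weight_max_reorient C f : (forall g, weight C g <= weight C f) ->
  forall g, weight (reorient C f) g <= weight (reorient C f) FA.
Proof.
move=> wmax; move: (wmax FA) (wmax FB) (wmax FC) (wmax FD) => {wmax}.
by case: f => /= ????; case; rewrite /=; lia.
Qed.

Lemma facet_dropE C f : red_cond C f ->
  (exists v, (U_(v) <= facet_mono C f)%MM /\
             tet_mono (red_I C f) (facet_mono C f - U_(v))%MM) <->
  facetA_drop (reorient C f).
Proof.
rewrite exists_vertex /tet_mono /facetA_drop.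
case: f => /= -[] r1 r2 r3; rewrite !lep1m_mk4 !mk4_subU !mk4E.
all: by split; [case=> [H|[H|[H|H]]] | case=> [H|[H|H]]]; disj_lia.
Qed.

End FacetArithmetic.

Section SpecialCurves.
Local Close Scope ring_scope.
Local Notation "m # s" := [multinom m (s i) | i < 4]
  (at level 40, left associativity, format "m # s").

Lemma tet_ideal_msym (k : fieldType) C (s : 'S_4) (p : {mpoly k[4]}) :
  tet_ideal k C (msym s p) <-> supp_in (fun m => tet_mono C (m # (s^-1)%g)) p.
Proof.
rewrite tet_idealE; split => Cp m nz.
  by apply: Cp; rewrite mcoeff_sym mpermK.
by rewrite -[m](mpermKV s); apply: Cp; rewrite -mcoeff_sym.
Qed.

Lemma special_monoE (k : fieldType) C : special k C <->
  exists (s : 'S_4) r,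
    forall m, tet_mono C m <-> tet_mono (Curve 0 r r r r 0) (m # (s^-1)%g).
Proof.
split=> [[s [r CT]] | [s [r CT]]]; exists s, r.
  by apply: (@supp_in_iff _ k) => p; rewrite -tet_idealE -tet_ideal_msym.
by move=> p; rewrite tet_idealE tet_ideal_msym; split; apply: supp_inW => m /CT.
Qed.

(* The monomial with exponent x at one end of an edge, 0 at the other and a large N at
   the remaining two vertices lies in the ideal iff the entry of that edge is <= x. *)
Lemma tet_mono_entries_le C D : (forall m, tet_mono D m -> tet_mono C m) ->
  a1 C <= a1 D /\ a2 C <= a2 D /\ a3 C <= a3 D /\
  a4 C <= a4 D /\ a5 C <= a5 D /\ a6 C <= a6 D.
Proof.
move=> DC; have [N leN] : exists N, a1 D + a2 D + a3 D + a4 D + a5 D + a6 D <= N.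
  by exists (a1 D + a2 D + a3 D + a4 D + a5 D + a6 D).
have test x y z w : tet_mono D (mk4 x y z w) ->
    a1 C <= x + y /\ a2 C <= x + z /\ a3 C <= x + w /\
    a4 C <= y + z /\ a5 C <= y + w /\ a6 C <= z + w.
  by move/DC; rewrite /tet_mono !mk4E.
have /test [? _] : tet_mono D (mk4 (a1 D) 0 N N) by rewrite /tet_mono !mk4E; lia.
have /test [_ [? _]] : tet_mono D (mk4 (a2 D) N 0 N) by rewrite /tet_mono !mk4E; lia.
have /test [_ [_ [? _]]] : tet_mono D (mk4 (a3 D) N N 0) by rewrite /tet_mono !mk4E; lia.
have /test [_ [_ [_ [? _]]]] : tet_mono D (mk4 N (a4 D) 0 N) by rewrite /tet_mono !mk4E; lia.
have /test [_ [_ [_ [_ [? _]]]]] : tet_mono D (mk4 N (a5 D) N 0) by rewrite /tet_mono !mk4E; lia.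
have /test [_ [_ [_ [_ [_ ?]]]]] : tet_mono D (mk4 N N (a6 D) 0) by rewrite /tet_mono !mk4E; lia.
lia.
Qed.

Lemma tet_mono_inj C D : (forall m, tet_mono C m <-> tet_mono D m) -> C = D.
Proof.
move=> CD; have := tet_mono_entries_le (fun m => (CD m).2).
have := tet_mono_entries_le (fun m => (CD m).1).
by case: C D {CD} => ?????? [??????] /= ??; congr Curve; lia.
Qed.

Lemma special_formP C : special_form C <-> exists r,
  [\/ C = Curve 0 r r r r 0, C = Curve r 0 r r 0 r | C = Curve r r 0 0 r r].
Proof.
case: C => c1 c2 c3 c4 c5 c6; rewrite /special_form /=; split.
  case=> [[-> [-> [-> [-> ->]]]] | [[-> [-> [-> [-> ->]]]] | [-> [-> [-> [-> ->]]]]]];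
    by eexists; first [exact: Or31 | exact: Or32 | exact: Or33].
by case=> r [] [-> -> -> -> -> ->]; tauto.
Qed.

Lemma mperm_mk4 (s : 'S_4) m : m # s = mk4 (m (s va)) (m (s vb)) (m (s vc)) (m (s vd)).
Proof. by rewrite [LHS]mk4_eta !mnmE. Qed.

(* The vertex pairs {a, y} and {z, w} span the two edges carrying 0. *)
Lemma special_form_cross C r (y z w : 'I_4) :
  uniq [:: va; y; z; w] ->
  (forall m, tet_mono C m <->
     r <= m va + m z /\ r <= m va + m w /\ r <= m y + m z /\ r <= m y + m w) ->
  special_form C.
Proof.
move=> uq CP; apply/special_formP; exists r.
case: (vertexP y) uq CP => -> uq CP;
  [by move: uq; rewrite /= inE eqxx | apply: Or31 | apply: Or32 | apply: Or33];
  case: (vertexP z) uq CP => ->; case: (vertexP w) => ->;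
  rewrite /= !inE ?eqxx ?orbT /= ?andbF // => _ CP;
  by apply: tet_mono_inj => m; rewrite CP /tet_mono /=; lia.
Qed.

Lemma special_form_perm C r (t : 'S_4) :
  (forall m, tet_mono C m <-> tet_mono (Curve 0 r r r r 0) (m # t)) -> special_form C.
Proof.
move=> CT.
have {}CT m : tet_mono C m <-> r <= m (t va) + m (t vc) /\ r <= m (t va) + m (t vd) /\
                                r <= m (t vb) + m (t vc) /\ r <= m (t vb) + m (t vd).
  by rewrite CT mperm_mk4 /tet_mono !mk4E /=; lia.
have uq x y z w : uniq [:: x; y; z; w] -> uniq [:: t x; t y; t z; t w].
  by move=> u; rewrite (map_inj_uniq perm_inj [:: x; y; z; w]).
case: (vertexP ((t^-1)%g va)) => /(congr1 t); rewrite permKV => E; rewrite -E in CT.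
- apply: (@special_form_cross _ r (t vb) (t vc) (t vd)) => [|m]; last by rewrite CT.
  by rewrite {1}E; apply: uq; rewrite /= !inE -!val_eqE !val_vertex.
- apply: (@special_form_cross _ r (t va) (t vc) (t vd)) => [|m]; last by rewrite CT; tauto.
  by rewrite {1}E; apply: uq; rewrite /= !inE -!val_eqE !val_vertex.
- apply: (@special_form_cross _ r (t vd) (t va) (t vb)) => [|m]; last by rewrite CT; lia.
  by rewrite {1}E; apply: uq; rewrite /= !inE -!val_eqE !val_vertex.
- apply: (@special_form_cross _ r (t vc) (t va) (t vb)) => [|m]; last by rewrite CT; lia.
  by rewrite {1}E; apply: uq; rewrite /= !inE -!val_eqE !val_vertex.
Qed.

Lemma special_formE (k : fieldType) C : special k C <-> special_form C.
Proof.
rewrite special_monoE; split => [[s [r CT]] | /special_formP [r []] ->].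
- exact: special_form_perm CT.
- by exists 1%g, r => m; rewrite invg1 mperm1.
- exists (tperm vb vc), r => m; rewrite tpermV mperm_mk4 tpermL tpermR.
  have [-> ->] : tperm vb vc va = va /\ tperm vb vc vd = vd.
    by split; apply: tpermD; rewrite -val_eqE !val_vertex.
  by rewrite /tet_mono !mk4E /=; lia.
- exists (tperm vb vd), r => m; rewrite tpermV mperm_mk4 tpermL tpermR.
  have [-> ->] : tperm vb vd va = va /\ tperm vb vd vc = vc.
    by split; apply: tpermD; rewrite -val_eqE !val_vertex.
  by rewrite /tet_mono !mk4E /=; lia.
Qed.

End SpecialCurves.

Lemma is_min_free_resE (k : fieldType) (I : {mpoly k[4]} -> Prop) (G : gres k) :
  is_graded G -> is_resolution I G -> is_min_free_res I G <-> is_minimal G.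
Proof. by move=> Ggr GI; split=> [[] | ?]. Qed.

Section MappingCone.
Variable k : fieldType.
Local Notation R := {mpoly k[4]}.
Variables (G : gres k) (L F : R) (e : nat) (c : 'cV[R]_(rk G 0)).
Local Notation K := (cone G L F e c).

Lemma mx11_eq0 (M : 'M[R]_1) : M 0 0 = 0 -> M = 0.
Proof. by move=> M0; rewrite [M]mx11_scalar M0 raddf0. Qed.

Lemma cone_augE (w : 'cV[R]_(rk G 0 + 1)) :
  (cone_aug G L F *m w) 0 0 = L * (aug G *m usubmx w) 0 0 - F * dsubmx w 0 0.
Proof.
rewrite -{1}[w]vsubmxK /cone_aug mul_row_col mulNmx mul_scalar_mx -scalemxAl.
by rewrite !mxE.
Qed.

Section Resolution.
Variables (I J : R -> Prop).
Hypotheses (Lc : aug G *m c = F%:M) (GI : is_resolution I G) (L_neq0 : L != 0)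
  (LF_regular : forall A s, L * A = F * s -> exists t, s = L * t)
  (JE : forall p, J p <-> exists q s, I q /\ p = L * q - F * s).

Lemma cone_aug_image p : J p <-> exists w : 'cV_(rk K 0), p = (aug K *m w) 0 0.
Proof.
case: GI => GI0 _ _; rewrite JE /=; split => [[q [s [/GI0 [u ->] ->]]] | [w ->]].
  exists (col_mx u (s%:M : 'M_1)).
  by rewrite cone_augE col_mxKu col_mxKd [_%:M 0 0]mxE eqxx mulr1n.
rewrite cone_augE; exists ((aug G *m usubmx w) 0 0), (dsubmx w 0 0).
by split => //; apply/GI0; exists (usubmx w).
Qed.

Lemma cone_aug_kernel (w : 'cV_(rk K 0)) :
  aug K *m w = 0 <-> exists w', w = dif K 0 *m w'.
Proof.
case: GI => _ GI1 _; split => [Kw | [w' ->]]; last first.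
  apply: mx11_eq0; rewrite cone_augE /= -{1 2}[w']vsubmxK mul_block_col.
  rewrite col_mxKu col_mxKd mul0mx add0r mulmxDr [aug G *m (c *m _)]mulmxA Lc.
  have -> : aug G *m (dif G 0 *m usubmx w') = 0 by apply/GI1; exists (usubmx w').
  by rewrite add0r !mul_scalar_mx !mxE mulrCA subrr.
have LqFs : L * (aug G *m usubmx w) 0 0 = F * dsubmx w 0 0.
  by apply/eqP; rewrite -subr_eq0 -cone_augE Kw mxE.
have [t st] := LF_regular LqFs.
have qFt : (aug G *m usubmx w) 0 0 = F * t.
  by apply: (mulfI L_neq0); rewrite LqFs st mulrCA.
have /GI1 [w1 Ew1] : aug G *m (usubmx w - t *: c) = 0.
  by rewrite mulmxBr -scalemxAr Lc [aug G *m _]mx11_scalar qFt scale_scalar_mx mulrC subrr.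
exists (col_mx w1 t%:M); rewrite /= mul_block_col mul0mx add0r -scalar_mxM.
rewrite mul_mx_scalar -Ew1 subrK -{1}[w]vsubmxK; congr col_mx.
by rewrite [dsubmx w]mx11_scalar st mulrC.
Qed.

Lemma cone_dif_exact i (w : 'cV_(rk K i.+1)) :
  dif K i *m w = 0 <-> exists w', w = dif K i.+1 *m w'.
Proof.
case: GI => _ _ GI2; case: i w => [|[|i]] w /=; last exact: GI2.
- rewrite -{1}[w]vsubmxK mul_block_col mul0mx add0r mul_scalar_mx -col_mx0.
  split => [/eq_col_mx [E1 E2] | [w' ->]].
    have w2 : dsubmx w = 0.
      by move/eqP: E2; rewrite scalemx_eq0 (negbTE L_neq0) => /eqP.
    move: E1; rewrite w2 mulmx0 addr0 => /(GI2 0) [w' Ew'].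
    by exists w'; rewrite mul_col_mx mul0mx -Ew' -w2 vsubmxK.
  rewrite mul_col_mx mul0mx col_mxKu col_mxKd mulmx0 scaler0 addr0.
  by have -> : dif G 0 *m (dif G 1 *m w') = 0 by apply/(GI2 0); exists w'.
- rewrite mul_col_mx mul0mx -col_mx0; split => [/eq_col_mx [/(GI2 1) ? _] // | ].
  by move=> /(GI2 1) ->.
Qed.

Lemma cone_resolution : is_resolution J K.
Proof. by split; [exact: cone_aug_image | exact: cone_aug_kernel | exact: cone_dif_exact]. Qed.

End Resolution.

Lemma gr_entry_shift (p : R) s t : gr_entry p s.+1 t.+1 <-> gr_entry p s t.
Proof. by rewrite /gr_entry ltnS subSS. Qed.

Lemma gr_entry_zero s t : gr_entry (0 : R) s t.
Proof. by rewrite /gr_entry; case: ifP => _ //; apply: rpred0. Qed.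

Lemma gr_entry_homog (p : R) t : gr_entry p 0 t <-> p \is t.-homog.
Proof. by rewrite /gr_entry leq0n subn0. Qed.

Lemma cone_graded :
  is_graded G -> L \is 1.-homog -> F \is e.-homog ->
  (forall j, gr_entry (c j 0) (sh G 0 j) e) -> is_graded K.
Proof.
move=> [Gaug Gdif] L1 Fe ce; split => [j | [|[|i]] a b] /=.
- case: split_ordP => j' ->; apply/gr_entry_homog.
    by rewrite row_mxEl mxE -[(sh G 0 j').+1]add1n; apply/dhomogM/gr_entry_homog/Gaug.
  by rewrite row_mxEr ord1 !mxE eqxx mulr1n dhomogN.
- case: split_ordP => a' ->; case: split_ordP => b' ->.
  + by rewrite block_mxEul; apply/gr_entry_shift/Gdif.
  + by rewrite block_mxEur ord1; apply/gr_entry_shift/ce.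
  + by rewrite block_mxEdl mxE; apply: gr_entry_zero.
  + by rewrite block_mxEdr !ord1 mxE eqxx mulr1n /gr_entry leqnSn subSn // subnn.
- case: split_ordP => a' ->.
  + by rewrite col_mxEu; apply/gr_entry_shift/Gdif.
  + by rewrite col_mxEd mxE; apply: gr_entry_zero.
- exact/gr_entry_shift/Gdif.
Qed.

Lemma cone_minimal : is_minimal G -> L@_0 = 0 ->
  is_minimal K <-> forall j, (c j 0)@_0 = 0.
Proof.
move=> Gmin L0; split => [Kmin j | c0 [|[|i]] a b /=].
- by have := Kmin 0%N (lshift _ j) (rshift _ 0); rewrite /= block_mxEur.
- case: (split_ordP a) => a' ->; case: (split_ordP b) => b' ->.
  + by rewrite block_mxEul.
  + by rewrite block_mxEur ord1.
  + by rewrite block_mxEdl mxE mcoeff0.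
  + by rewrite block_mxEdr !ord1 mxE eqxx mulr1n.
- case: (split_ordP a) => a' ->; first by rewrite col_mxEu.
  by rewrite col_mxEd mxE mcoeff0.
- exact: Gmin.
Qed.

End MappingCone.

(* A monomial of F = aug G *m c is a product of a monomial of I and one of c, and the
   former divides F properly unless the latter is the constant monomial. *)
Lemma lift_const_freeE (k : fieldType) (G : gres k) (I : {mpoly k[4]} -> Prop)
    (P : 'X_{1..4} -> Prop) (mF : 'X_{1..4}) (c : 'cV_(rk G 0)) :
  upclosed P -> (forall p, I p <-> supp_in P p) -> is_resolution I G -> is_minimal G ->
  aug G *m c = ('X_[mF])%:M ->
  (forall j, (c j 0)@_0 = 0) <-> exists v, (U_(v) <= mF)%MM /\ P (mF - U_(v))%MM.
Proof.
move=> Pup IP [GI0 GI1 _] Gmin Lc; split => [c0 | [v [le Pv]] j].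
  have E : \sum_j aug G 0 j * c j 0 = 'X_[mF].
    by have := congr1 (fun M : 'M_1 => M 0 0) Lc; rewrite !mxE.
  suff /supp_in_X [/eqP // | //] :
      supp_in (fun m => m != mF \/ exists v, (U_(v) <= mF)%MM /\ P (mF - U_(v))%MM)
        ('X_[mF] : {mpoly k[4]}).
  rewrite -E; apply: supp_in_sum => j _.
  apply: (@supp_inM _ _ P (fun m => m != 0%MM)).
  - move=> m1 m2 Pm1 m2_neq0; have [mFE|] := eqVneq (m1 + m2)%MM mF; [right | by left].
    apply: upclosed_subU Pup Pm1 _ _; first by rewrite -mFE lem_addr.
    apply: contraNneq m2_neq0 => m1E; rewrite -mdeg_eq0.
    by move/(congr1 mdeg): mFE; rewrite mdegD m1E; lia.
  - by apply/IP/GI0; exists (delta_mx j 0); rewrite -colE mxE.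
  - by move=> m; apply: contraNneq => ->; rewrite c0.
have /IP /GI0 [u Eu] : supp_in P ('X_[mF - U_(v)] : {mpoly k[4]}) by apply/supp_in_X.
have /GI1 [w Ew] : aug G *m (c - 'X_v *: u) = 0.
  rewrite mulmxBr -scalemxAr Lc [aug G *m u]mx11_scalar -Eu scale_scalar_mx.
  by rewrite -mpolyXD addmC submK // subrr.
move/(congr1 (fun M : 'cV_(rk G 0) => M j 0)): Ew.
rewrite !mxE => /eqP; rewrite subr_eq => /eqP ->.
rewrite mcoeffD mcoeff0M mcoeffX mnm1_eq0 mul0r addr0 raddf_sum.
by apply: big1 => b _; rewrite /= mcoeff0M Gmin mul0r.
Qed.

Theorem corollary5p8 (k : fieldType) (C : curve) (f : facet) :
  nontrivial C ->
  (forall g : facet, (weight C g <= weight C f)%N) ->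
  red_cond C f ->
  forall (G : gres k),
    is_min_free_res (tet_ideal k (red_I C f)) G ->
  forall (c : 'cV[{mpoly k[4]}]_(rk G 0)),
    aug G *m c = (red_F k C f)%:M ->
    (forall j, gr_entry (c j 0) (sh G 0 j) (weight C f)) ->
    (is_min_free_res (tet_ideal k C)
        (cone G (red_L k f) (red_F k C f) (weight C f) c)
     <-> ~ special k C).
Proof.
move=> nt wmax rc G [Ggr Gres Gmin] c Lc cgr; rewrite red_LE red_FE in Lc *.
have Kres := cone_resolution (weight C f) Lc Gres (mpolyX_neq0 _ _)
  (fun A s => dvdX_mulX (facet_mono_var C f)) (fun p => tet_ideal_link p rc).
have Kgr : is_graded (cone G 'X_(facet_var f) 'X_[facet_mono C f] (weight C f) c).
  apply: cone_graded Ggr _ _ cgr; rewrite dhomogX; apply/eqP.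
    exact: mdeg1.
  exact: mdeg_facet_mono.
rewrite (is_min_free_resE Kgr Kres) (cone_minimal _ _ _ Gmin); last first.
  by rewrite mcoeffX mnm1_eq0.
rewrite (lift_const_freeE (@upclosed_tet_mono _) (@tet_idealE _ _) Gres Gmin Lc).
rewrite facet_dropE // facetA_drop_special ?nontrivial_reorient ?red_cond_reorient //;
  last exact: weight_max_reorient.
by rewrite special_form_reorient special_formE.
Qed.
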